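(* Let $R$ be any binary relation on $U$. Then $(\mathcal J_p(\wp(U)^{\vartriangle}),\subseteq)\cong(\mathcal J_p(\wp(U)^{\blacktriangle}),\supseteq)$. More precisely, the map $\varphi\colon R(x)\mapsto\breve R(w_x)$, where $w_x$ is any element of $\mathfrak{core}R(x)$, is a well-defined bijection $\mathcal J_p(\wp(U)^{\vartriangle})\to\mathcal J_p(\wp(U)^{\blacktriangle})$ which reverses inclusion, and its inverse is $\breve R(y)\mapsto R(w_y)$ with $w_y$ any element of $\mathfrak{core}\breve R(y)$, also inclusion-reversing.
   Context: Let $U$ be a set and $R\subseteq U\times U$ a binary relation. For $x\in U$, $R(x)=\{y\in U\mid (x,y)\in R\}$ and $\breve R(x)=\{y\in U\mid (y,x)\in R\}$. $\mathfrak{core}R(x)=\{w\in R(x)\mid \text{for all }y\in U,\ w\in R(y)\text{ implies }R(x)\subseteq R(y)\}$, and $\mathfrak{core}\breve R(x)$ is defined likewise with $\breve R$ in place of $R$. For $X\subseteq U$: $X^{\blacktriangle}=\{x\in U\mid R(x)\cap X\neq\emptyset\}$ and $X^{\vartriangle}=\{x\in U\mid \breve R(x)\cap X\neq\emptyset\}$, so $\{x\}^{\vartriangle}=R(x)$, $\{x\}^{\blacktriangle}=\breve R(x)$. $\wp(U)^{\blacktriangle}=\{X^{\blacktriangle}\mid X\subseteq U\}$, $\wp(U)^{\vartriangle}=\{X^{\vartriangle}\mid X\subseteq U\}$, complete lattices under $\subseteq$ with joins given by unions. An element $p$ of a complete lattice $L$ is completely join-prime if $p\le\bigvee X$ implies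 $p\le x$ for some $x\in X$, for every $X\subseteq L$; $\mathcal J_p(L)$ denotes the set of completely join-prime elements. *)

Set Implicit Arguments.

Section Defs.
Variables (U : Type) (R : U -> U -> Prop).

Definition subset (A B : U -> Prop) : Prop := forall z, A z -> B z.

Definition Rimg (x : U) : U -> Prop := fun y => R x y.
Definition Rinv (x : U) : U -> Prop := fun y => R y x.

Definition coreR (x : U) : U -> Prop :=
  fun w => Rimg x w /\ forall y, Rimg y w -> subset (Rimg x) (Rimg y).
Definition coreRinv (x : U) : U -> Prop :=
  fun w => Rinv x w /\ forall y, Rinv y w -> subset (Rinv x) (Rinv y).

Definition upB (X : U -> Prop) : U -> Prop :=
  fun x => exists y, Rimg x y /\ X y.
Definition upT (X : U -> Prop) : U -> Prop :=
  fun x => exists y, Rinv x y /\ X y.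

Definition famB (A : U -> Prop) : Prop := exists X, A = upB X.
Definition famT (A : U -> Prop) : Prop := exists X, A = upT X.
End Defs.

Definition bigU (U : Type) (S : (U -> Prop) -> Prop) : U -> Prop :=
  fun z => exists A, S A /\ A z.

(* completely join-prime elements of a family F of sets, ordered by inclusion,
   whose joins are unions *)
Definition cjp (U : Type) (F : (U -> Prop) -> Prop) (P : U -> Prop) : Prop :=
  F P /\ forall S : (U -> Prop) -> Prop,
    (forall A, S A -> F A) -> subset P (bigU S) -> exists A, S A /\ subset P A.

From Stdlib Require Import Classical FunctionalExtensionality PropExtensionality.
Set Implicit Arguments.

(* A set in wp(U)^tri is the union of the R(y), y in X, so a completely
   join-prime one is a single R(x). Its core is nonempty: otherwise every
   z in R(x) lies in some R(y) not containing R(x), and these sets cover R(x).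
   The map P |-> {y | P ⊆ R(y)} sends R(x) to R-breve(w) for any w in core R(x),
   and w in core R(x) says exactly that x is in the core of R-breve(w); so the
   map applied twice is the identity, and the dual statements are the same
   statements for the converse relation. *)

Lemma pred_ext (U : Type) (A B : U -> Prop) : (forall z, A z <-> B z) -> A = B.
Proof.
  intro H; apply functional_extensionality; intro z.
  apply propositional_extensionality; auto.
Qed.

Definition converse (U : Type) (R : U -> U -> Prop) : U -> U -> Prop :=
  fun a b => R b a.

Section CompletelyJoinPrime.
Variables (U : Type) (R : U -> U -> Prop).

Definition upper_bounds (P : U -> Prop) : U -> Prop :=
  fun y => subset P (Rimg R y).

Lemma famT_Rimg y : famT R (Rimg R y).
Proof.
  exists (fun z => z = y); apply pred_ext; intro z; split.
  - intro Hz; exists y; auto.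
  - intros [y' [Hz ->]]; exact Hz.
Qed.

Lemma cjp_famT_Rimg P : cjp (famT R) P -> exists x, P = Rimg R x.
Proof.
  intros [[X ->] Hprime].
  destruct (Hprime (fun A => exists y, X y /\ A = Rimg R y))
    as [A [[y [Xy ->]] Hsub]].
  - intros A [y [_ ->]]; apply famT_Rimg.
  - intros z [y [Ryz Xy]]; exists (Rimg R y); split; [exists y; auto | exact Ryz].
  - exists y; apply pred_ext; intro z; split; [apply Hsub|].
    intro Hz; exists y; auto.
Qed.

Lemma coreR_of_cjp x : cjp (famT R) (Rimg R x) -> exists w, coreR R x w.
Proof.
  intros [_ Hprime]; apply NNPP; intro Hempty.
  destruct (Hprime (fun A => exists y, A = Rimg R y /\ ~ subset (Rimg R x) A))
    as [A [[y [-> Hnot]] Hsub]]; [| |contradiction].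
  - intros A [y [-> _]]; apply famT_Rimg.
  - intros z Hz.
    assert (Hnotcore : ~ forall y, Rimg R y z -> subset (Rimg R x) (Rimg R y))
      by (intro Hc; apply Hempty; exists z; split; assumption).
    apply not_all_ex_not in Hnotcore as [y Hy].
    apply imply_to_and in Hy as [Hyz Hnot].
    exists (Rimg R y); split; [exists y; auto | exact Hyz].
Qed.

Lemma cjp_famT_of_coreR x w : coreR R x w -> cjp (famT R) (Rimg R x).
Proof.
  intros [Hw Hcore]; split; [apply famT_Rimg|].
  intros S HS Hcover.
  destruct (Hcover w Hw) as [A [SA Aw]].
  exists A; split; [exact SA|].
  destruct (HS A SA) as [X ->]; destruct Aw as [y [Ryw Xy]].
  intros z Hz; exists y; split; [exact (Hcore y Ryw z Hz) | exact Xy].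
Qed.

Lemma cjp_famTP P :
  cjp (famT R) P <-> exists x w, P = Rimg R x /\ coreR R x w.
Proof.
  split.
  - intro HP; destruct (cjp_famT_Rimg HP) as [x ->].
    destruct (coreR_of_cjp HP) as [w Hw]; exists x, w; auto.
  - intros [x [w [-> Hw]]]; exact (cjp_famT_of_coreR Hw).
Qed.

Lemma upper_bounds_Rimg x w : coreR R x w -> upper_bounds (Rimg R x) = Rinv R w.
Proof.
  intros [Hw Hcore]; apply pred_ext; intro y; split.
  - intro Hy; exact (Hy w Hw).
  - exact (Hcore y).
Qed.

Lemma coreR_converse x w : coreR R x w -> coreR (converse R) w x.
Proof.
  intros [Hw Hcore]; split; [exact Hw|].
  intros y Hy z Hz; exact (Hcore z Hz y Hy).
Qed.

Lemma upper_bounds_antitone P P' :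
  cjp (famT R) P' -> (subset P P' <-> subset (upper_bounds P') (upper_bounds P)).
Proof.
  intros [x [w [-> _]]]%cjp_famTP; split.
  - intros HPP' y Hy z Hz; exact (Hy z (HPP' z Hz)).
  - intro H; apply (H x); intros z Hz; exact Hz.
Qed.

End CompletelyJoinPrime.

Lemma upper_bounds_cjp (U : Type) (R : U -> U -> Prop) P :
  cjp (famT R) P -> cjp (famT (converse R)) (upper_bounds R P).
Proof.
  intros [x [w [-> Hw]]]%(cjp_famTP R); rewrite (upper_bounds_Rimg Hw).
  exact (cjp_famT_of_coreR (coreR_converse Hw)).
Qed.

Lemma upper_bounds_involutive (U : Type) (R : U -> U -> Prop) P :
  cjp (famT R) P -> upper_bounds (converse R) (upper_bounds R P) = P.
Proof.
  intros [x [w [-> Hw]]]%(cjp_famTP R); rewrite (upper_bounds_Rimg Hw).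
  exact (upper_bounds_Rimg (coreR_converse Hw)).
Qed.

(* famB, Rinv and coreRinv for R are convertible to famT, Rimg and coreR for
   [converse R]; the second half of each conjunct is the first for [converse R]. *)
Theorem mainTheorem9 (U : Type) (R : U -> U -> Prop) :
  (forall P, cjp (famT R) P -> exists x w, P = Rimg R x /\ coreR R x w) /\
  (forall Q, cjp (famB R) Q -> exists y w, Q = Rinv R y /\ coreRinv R y w) /\
  exists phi psi : (U -> Prop) -> (U -> Prop),
    (forall x w, cjp (famT R) (Rimg R x) -> coreR R x w ->
       phi (Rimg R x) = Rinv R w) /\
    (forall y w, cjp (famB R) (Rinv R y) -> coreRinv R y w ->
       psi (Rinv R y) = Rimg R w) /\
    (forall P, cjp (famT R) P -> cjp (famB R) (phi P)) /\
    (forall Q, cjp (famB R) Q -> cjp (famT R) (psi Q)) /\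
    (forall P, cjp (famT R) P -> psi (phi P) = P) /\
    (forall Q, cjp (famB R) Q -> phi (psi Q) = Q) /\
    (forall P P', cjp (famT R) P -> cjp (famT R) P' ->
       (subset P P' <-> subset (phi P') (phi P))) /\
    (forall Q Q', cjp (famB R) Q -> cjp (famB R) Q' ->
       (subset Q Q' <-> subset (psi Q') (psi Q))).
Proof.
  pose (R' := converse R).
  split; [intro P; apply (@cjp_famTP U R)|].
  split; [intro Q; apply (@cjp_famTP U R')|].
  exists (upper_bounds R), (upper_bounds R').
  split; [intros x w _; apply (@upper_bounds_Rimg U R)|].
  split; [intros y w _; apply (@upper_bounds_Rimg U R')|].
  split; [apply (@upper_bounds_cjp U R)|].
  split; [apply (@upper_bounds_cjp U R')|].
  split; [apply (@upper_bounds_involutive U R)|].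
  split; [apply (@upper_bounds_involutive U R')|].
  split; [intros P P' _; apply (@upper_bounds_antitone U R)|].
  intros Q Q' _; apply (@upper_bounds_antitone U R').
Qed.
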